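(* Let $E$ be a connected graded Frobenius algebra with top degree $l$, $\mathfrak e$ a basis of $E_l$, $\{a_1,\dots,a_n\}$ a basis of $E_1$, $\{b_i\}$ the basis of $E_{l-1}$ with $a_ib_j=\delta_{ij}\mathfrak e$, $\{c_i\}$ the basis of $E_1$ with $b_ic_j=\delta_{ij}\mathfrak e$, and $\alpha=(\alpha_{ij})$ the invertible matrix with $c_i=\sum_j\alpha_{ij}a_j$. Let $K$ be a Hopf algebra with antipode $S$ such that $E$ is a left $K$-comodule algebra via a grading-preserving coaction $\rho$, and write $\rho(a_i)=\sum_s y_{is}\otimes a_s$, $\rho(b_i)=\sum_s f_{is}\otimes b_s$, $\rho(c_i)=\sum_s g_{is}\otimes c_s$, $\rho(\mathfrak e)={\sf D}\otimes\mathfrak e$. Let $\mathbb Y=(y_{ij})$, $\mathbb F=(f_{ij})$, $\mathbb G=(g_{ij})$, and $\mathbb I$ the $n\times n$ identity matrix. Then: (a) $\mathbb YS(\mathbb Y)=\mathbb I=S(\mathbb Y)\mathbb Y$; (b) $\mathbb GS(\mathbb G)=\mathbb I=S(\mathbb G)\mathbb G$; (c) $\mathbb Y\mathbb F^\tau={\sf D}\mathbb I$, and consequently $S(\mathbb Y)=\mathbb F^\tau({\sf D}^{-1}\mathbb I)$; (d) $S(\mathbb F)S(\mathbb Y^\tau)={\sf D}^{-1}\mathbb I$; (e) $S(\mathbb G)S(\mathbb F^\tau)={\sf D}^{-1}\mathbb I$, and consequently $S(\mathbb F^\tau)\,{\sf D}\mathbb I=\mathbb G$; (f) $S^2(\mathbb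 Y)={\sf D}\mathbb I\cdot\mathbb G\cdot{\sf D}^{-1}\mathbb I$; (g) $\mathbb G=\alpha\mathbb Y\alpha^{-1}$.
   Context: A connected graded algebra $E$ is Frobenius if finite dimensional with a nondegenerate associative bilinear form of some degree; then the top nonzero degree $E_l$ is one-dimensional and multiplication gives nondegenerate pairings $E_i\times E_{l-i}\to E_l$, so the bases $\{b_i\},\{c_i\}$ exist uniquely. The element ${\sf D}$ (the homological codeterminant of the coaction) is grouplike, hence invertible with $S({\sf D})={\sf D}^{-1}$. Matrices have entries in $K$, are multiplied by $(XY)_{ij}=\sum_sX_{is}Y_{sj}$, $S(X)$ means applying $S$ entrywise, $X^\tau$ is the transpose, and ${\sf D}\mathbb I$ is the diagonal matrix with entries ${\sf D}$. *)

From HB Require Import structures.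
From mathcomp Require Import all_boot all_order all_algebra all_field.
Set Implicit Arguments. Unset Strict Implicit. Unset Printing Implicit Defensive.
Import GRing.Theory.
Local Open Scope ring_scope.

(* Tensor products over a field k, presented by the universal property.   *)
(* An element of A (x) B is written as a formal finite sum                 *)
(* sum_(p <- s) p.1 (x) p.2, with s : seq (A * B); two formal sums denote *)
(* the same tensor iff every bilinear map out of A x B (into any k-vector *)
(* space V) takes the same value on them.  Likewise for A (x) B (x) C.     *)

Definition bilinear_map (k : fieldType) (A B V : lmodType k)
  (phi : A -> B -> V) : Prop :=
  (forall (c : k) x y z, phi (c *: x + y) z = c *: phi x z + phi y z) /\
  (forall (c : k) x y z, phi z (c *: x + y) = c *: phi z x + phi z y).

Definition trilinear_map (k : fieldType) (A B C V : lmodType k)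
  (phi : A -> B -> C -> V) : Prop :=
  (forall (c : k) x y u w, phi (c *: x + y) u w = c *: phi x u w + phi y u w) /\
  (forall (c : k) x y u w, phi u (c *: x + y) w = c *: phi u x w + phi u y w) /\
  (forall (c : k) x y u w, phi u w (c *: x + y) = c *: phi u w x + phi u w y).

Definition tensor_eq (k : fieldType) (A B : lmodType k) (s t : seq (A * B)) : Prop :=
  forall (V : lmodType k) (phi : A -> B -> V), bilinear_map phi ->
    \sum_(p <- s) phi p.1 p.2 = \sum_(p <- t) phi p.1 p.2.

Definition tensor3_eq (k : fieldType) (A B C : lmodType k)
  (s t : seq (A * B * C)) : Prop :=
  forall (V : lmodType k) (phi : A -> B -> C -> V), trilinear_map phi ->
    \sum_(p <- s) phi p.1.1 p.1.2 p.2 = \sum_(p <- t) phi p.1.1 p.1.2 p.2.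

Definition hopf_algebra (k : fieldType) (K : algType k)
  (Delta : K -> seq (K * K)) (eps : K -> k) (S : K -> K) : Prop :=
  (forall (c : k) (x y : K),
     tensor_eq (Delta (c *: x + y))
               ([seq (c *: p.1, p.2) | p <- Delta x] ++ Delta y)) /\
  (forall x y : K,
     tensor_eq (Delta (x * y))
               [seq (p.1 * q.1, p.2 * q.2) | p <- Delta x, q <- Delta y]) /\
  tensor_eq (Delta 1) [:: (1, 1)] /\
  (forall x : K,
     tensor3_eq [seq (q.1, q.2, p.2) | p <- Delta x, q <- Delta p.1]
                [seq (p.1, q.1, q.2) | p <- Delta x, q <- Delta p.2]) /\
  (forall (c : k) (x y : K), eps (c *: x + y) = c * eps x + eps y) /\
  (forall x y : K, eps (x * y) = eps x * eps y) /\
  eps 1 = 1 /\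
  (forall x : K, \sum_(p <- Delta x) eps p.1 *: p.2 = x) /\
  (forall x : K, \sum_(p <- Delta x) eps p.2 *: p.1 = x) /\
  (forall (c : k) (x y : K), S (c *: x + y) = c *: S x + S y) /\
  (forall x : K, \sum_(p <- Delta x) S p.1 * p.2 = (eps x)%:A) /\
  (forall x : K, \sum_(p <- Delta x) p.1 * S p.2 = (eps x)%:A).

Definition comodule_algebra (k : fieldType) (K : algType k)
  (Delta : K -> seq (K * K)) (eps : K -> k) (E : falgType k)
  (rho : E -> seq (K * E)) : Prop :=
  (forall (c : k) (x y : E),
     tensor_eq (rho (c *: x + y))
               ([seq (c *: p.1, p.2) | p <- rho x] ++ rho y)) /\
  (forall x : E,
     tensor3_eq [seq (q.1, q.2, p.2) | p <- rho x, q <- Delta p.1]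
                [seq (p.1, q.1, q.2) | p <- rho x, q <- rho p.2]) /\
  (forall x : E, \sum_(p <- rho x) eps p.1 *: p.2 = x) /\
  (forall x y : E,
     tensor_eq (rho (x * y))
               [seq (p.1 * q.1, p.2 * q.2) | p <- rho x, q <- rho y]) /\
  tensor_eq (rho 1) [:: (1, 1)].

Definition graded_algebra (k : fieldType) (E : falgType k)
  (Egr : nat -> {vspace E}) : Prop :=
  (exists N : nat,
     (forall i, (N < i)%N -> Egr i = 0%VS) /\
     directv (\sum_(i < N.+1) Egr i) /\
     (\sum_(i < N.+1) Egr i)%VS = fullv) /\
  (forall i j (x y : E), x \in Egr i -> y \in Egr j -> x * y \in Egr (i + j)).

Definition connected_graded (k : fieldType) (E : falgType k)
  (Egr : nat -> {vspace E}) : Prop :=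
  graded_algebra Egr /\ Egr 0 = <[1]>%VS.

Definition graded_frobenius (k : fieldType) (E : falgType k)
  (Egr : nat -> {vspace E}) : Prop :=
  exists (form : E -> E -> k) (d : nat),
    (forall (c : k) x y z, form (c *: x + y) z = c * form x z + form y z) /\
    (forall (c : k) x y z, form z (c *: x + y) = c * form z x + form z y) /\
    (forall x y z, form (x * y) z = form x (y * z)) /\
    (forall x, (forall y, form x y = 0) -> x = 0) /\
    (forall y, (forall x, form x y = 0) -> y = 0) /\
    (forall i j x y, x \in Egr i -> y \in Egr j -> i + j <> d -> form x y = 0).

Definition top_degree (k : fieldType) (E : falgType k)
  (Egr : nat -> {vspace E}) (l : nat) : Prop :=
  Egr l <> 0%VS /\ (forall i, (l < i)%N -> Egr i = 0%VS).

Definition grading_preserving (k : fieldType) (K : algType k) (E : falgType k)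
  (Egr : nat -> {vspace E}) (rho : E -> seq (K * E)) : Prop :=
  forall i (x : E), x \in Egr i ->
    exists s : seq (K * E), tensor_eq (rho x) s /\ all (fun p => p.2 \in Egr i) s.

From HB Require Import structures.
From mathcomp Require Import all_boot all_order all_algebra all_field.
Import GRing.Theory.
Local Open Scope ring_scope.
Set Implicit Arguments. Unset Strict Implicit. Unset Printing Implicit Defensive.

(* For a Hopf algebra K we then show that the matrix M of a coaction on a
   free family is a comatrix (Delta M_ij = sum_s M_is (x) M_sj and
   eps M_ij = delta_ij), so that S(M) is a two-sided inverse of M: this is
   (a) and (b).  The coefficient D of the coaction on the top class e is
   grouplike, hence invertible with S(S D) = D and S(x S(D)) = D S(x).
   Multiplicativity of the coaction turns the dual-basis relations
   a_i b_j = b_i c_j = delta_ij e into Y F^T = F G^T = D I, from which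
   (c)-(f) follow by matrix algebra over the noncommutative ring K; (g)
   follows by evaluating the coaction on c_i = sum_j alpha_ij a_j in
   coordinates.  Gradedness and the Frobenius form enter the argument only
   through the freeness of the given bases. *)

Section Multilinear.
Variable k : fieldType.
Implicit Types A B C V W : lmodType k.

(* k-linear maps, as a predicate on plain functions; a linear functional on
   A is a linear map into the regular module k^o. *)
Definition lin A B (L : A -> B) : Prop :=
  forall c x y, L (c *: x + y) = c *: L x + L y.

Lemma lin0 A B (L : A -> B) : lin L -> L 0 = 0.
Proof. by move=> hL; have := hL (-1) 0 0; rewrite !scaleN1r oppr0 addr0 addNr. Qed.

Lemma linZ A B (L : A -> B) c x : lin L -> L (c *: x) = c *: L x.
Proof. by move=> hL; rewrite -[c *: x]addr0 hL (lin0 hL) addr0. Qed.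

Lemma lin_sum A B (L : A -> B) I (r : seq I) (F : I -> A) :
  lin L -> L (\sum_(i <- r) F i) = \sum_(i <- r) L (F i).
Proof.
move=> hL; elim: r => [|x r IH]; first by rewrite !big_nil (lin0 hL).
by rewrite !big_cons -[F x]scale1r hL !scale1r IH.
Qed.

Lemma lin_id A : lin (fun x : A => x).
Proof. by []. Qed.

Lemma bilinear_linl A B V (phi : A -> B -> V) z : bilinear_map phi -> lin (phi^~ z).
Proof. by case=> h _ c x y; exact: h. Qed.

Lemma bilinear_linr A B V (phi : A -> B -> V) z : bilinear_map phi -> lin (phi z).
Proof. by case=> _ h c x y; exact: h. Qed.

Lemma bilinear_comp A B A' B' V (phi : A -> B -> V) (L1 : A' -> A) (L2 : B' -> B) :
  bilinear_map phi -> lin L1 -> lin L2 -> bilinear_map (fun x y => phi (L1 x) (L2 y)).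
Proof. by move=> [h1 h2] hL1 hL2; split=> c x y z; rewrite ?hL1 ?hL2 ?h1 ?h2. Qed.

Lemma bilinear_sum A B V I (r : seq I) (F : I -> A -> B -> V) :
  (forall i, bilinear_map (F i)) -> bilinear_map (fun x y => \sum_(i <- r) F i x y).
Proof.
move=> hF; split=> c x y z; rewrite scaler_sumr -big_split /=;
  by apply: eq_bigr => i _; case: (hF i) => h1 h2; rewrite ?h1 ?h2.
Qed.

Lemma bilinear_weight A B V (f : B -> k^o) (L : A -> V) :
  lin f -> lin L -> bilinear_map (fun u v => f v *: L u).
Proof.
move=> hf hL; split=> c x y z.
- by rewrite hL scalerDr !scalerA mulrC.
- by rewrite hf scalerDl scalerA.
Qed.

Lemma trilinear_weight A B C V (f : C -> k^o) (psi : A -> B -> V) :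
  lin f -> bilinear_map psi -> trilinear_map (fun u v w => f w *: psi u v).
Proof.
move=> hf [h1 h2]; split; [|split] => c x y u w.
- by rewrite h1 scalerDr !scalerA mulrC.
- by rewrite h2 scalerDr !scalerA mulrC.
- by rewrite hf scalerDl scalerA.
Qed.

Lemma tensor_eq_refl A B (s : seq (A * B)) : tensor_eq s s.
Proof. by []. Qed.

Definition tensor_linear A B C (f : A -> seq (B * C)) : Prop :=
  forall c x y, tensor_eq (f (c *: x + y)) ([seq (c *: p.1, p.2) | p <- f x] ++ f y).

Lemma tensor_linear_eval A B C V (f : A -> seq (B * C)) (phi : B -> C -> V) :
  tensor_linear f -> bilinear_map phi -> lin (fun x => \sum_(p <- f x) phi p.1 p.2).
Proof.
move=> hf hp c x y; rewrite (hf c x y V phi hp) big_cat big_map scaler_sumr /=.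
by congr (_ + _); apply: eq_bigr => p _; rewrite (linZ _ _ (bilinear_linl _ hp)).
Qed.

Lemma tensor_eq_scale A B C (f : A -> seq (B * C)) x s c :
  tensor_linear f -> tensor_eq (f x) s ->
  tensor_eq (f (c *: x)) [seq (c *: p.1, p.2) | p <- s].
Proof.
move=> hf hs V phi hp; have := linZ c x (tensor_linear_eval hf hp); rewrite /= => ->.
rewrite (hs V phi hp) big_map scaler_sumr; apply: eq_bigr => p _.
by rewrite (linZ _ _ (bilinear_linl _ hp)).
Qed.

Lemma tensor_eq_nestl A B C W V (f : A -> seq (B * C)) (phi : B -> C -> W -> V)
  (s t : seq (A * W)) :
  tensor_linear f -> trilinear_map phi -> tensor_eq s t ->
  \sum_(p <- s) \sum_(q <- f p.1) phi q.1 q.2 p.2 =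
  \sum_(p <- t) \sum_(q <- f p.1) phi q.1 q.2 p.2.
Proof.
move=> hf [h1 [h2 h3]] hst.
apply: (hst V (fun u w => \sum_(q <- f u) phi q.1 q.2 w)); split=> c x y z.
- have hb : bilinear_map (fun u v => phi u v z) by split=> ????; [exact: h1|exact: h2].
  exact: (tensor_linear_eval hf hb).
- by rewrite scaler_sumr -big_split /=; apply: eq_bigr => q _; exact: h3.
Qed.

Lemma tensor_eq_nestr A B C W V (f : A -> seq (B * C)) (phi : W -> B -> C -> V)
  (s t : seq (W * A)) :
  tensor_linear f -> trilinear_map phi -> tensor_eq s t ->
  \sum_(p <- s) \sum_(q <- f p.2) phi p.1 q.1 q.2 =
  \sum_(p <- t) \sum_(q <- f p.2) phi p.1 q.1 q.2.
Proof.
move=> hf [h1 [h2 h3]] hst.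
apply: (hst V (fun w u => \sum_(q <- f u) phi w q.1 q.2)); split=> c x y z.
- by rewrite scaler_sumr -big_split /=; apply: eq_bigr => q _; exact: h1.
- have hb : bilinear_map (phi z) by split=> ????; [exact: h2|exact: h3].
  exact: (tensor_linear_eval hf hb).
Qed.

End Multilinear.

Section AlgebraTensors.
Variable k : fieldType.

Lemma lin_mulr (A : algType k) (z : A) : lin (fun x : A => x * z).
Proof. by move=> c x y; rewrite mulrDl scalerAl. Qed.

Lemma lin_mull (A : algType k) (z : A) : lin (fun x : A => z * x).
Proof. by move=> c x y; rewrite mulrDr scalerAr. Qed.

Lemma bilinear_mul (A : algType k) : bilinear_map (fun x y : A => x * y).
Proof. by split=> c x y z; [exact: lin_mulr | exact: lin_mull]. Qed.

Lemma tensor_eq_mul (X A B : algType k) (f : X -> seq (A * B)) x y s t :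
  (forall x y, tensor_eq (f (x * y)) [seq (p.1 * q.1, p.2 * q.2) | p <- f x, q <- f y]) ->
  tensor_eq (f x) s -> tensor_eq (f y) t ->
  tensor_eq (f (x * y)) [seq (p.1 * q.1, p.2 * q.2) | p <- s, q <- t].
Proof.
move=> hm hs ht V phi hp; rewrite (hm x y V phi hp) !big_allpairs_dep /=.
have hb : bilinear_map (fun u v => \sum_(q <- f y) phi (u * q.1) (v * q.2)).
  by apply: bilinear_sum => q; apply: bilinear_comp => //; apply: lin_mulr.
rewrite (hs V _ hb); apply: eq_bigr => p _.
apply: (ht V (fun u v => phi (p.1 * u) (p.2 * v))).
by apply: bilinear_comp => //; apply: lin_mull.
Qed.

End AlgebraTensors.

Lemma sum_kronecker (k : fieldType) (W : lmodType k) n (w : 'I_n -> W) j :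
  \sum_s (s == j)%:R *: w s = w j.
Proof.
rewrite (bigD1 j) //= eqxx scale1r big1 ?addr0 // => s /negbTE ->.
exact: scale0r.
Qed.

Section Coordinates.
Variables (k : fieldType) (E : vectType k) (n : nat) (X : 'I_n -> E).

Definition coords (j : 'I_n) : E -> k^o := coord [tuple X i | i < n] j.

Lemma coords_lin j : lin (coords j).
Proof. by move=> c x y; rewrite /coords linearP. Qed.

Hypothesis X_free : free [seq X i | i <- enum 'I_n].

Let tuple_free : free [tuple X i | i < n].
Proof. by []. Qed.

Lemma coords_sum (v : 'I_n -> k) j : coords j (\sum_i v i *: X i) = v j.
Proof.
rewrite -(coord_sum_free v j tuple_free); congr (coords j _).
by apply: eq_bigr => i _; rewrite -tnth_nth tnth_mktuple.
Qed.

Lemma coords_basis i j : coords j (X i) = (i == j)%:R.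
Proof. by rewrite /coords -[X i](tnth_mktuple X) (tnth_nth 0) coord_free. Qed.

Lemma sum_coords_basis (W : lmodType k) (w : 'I_n -> W) j :
  \sum_s coords j (X s) *: w s = w j.
Proof. by under eq_bigr do rewrite coords_basis; exact: sum_kronecker. Qed.

End Coordinates.

Lemma combination_unitmx (k : fieldType) (E : vectType k) n (a c : 'I_n -> E)
  (alpha : 'M[k]_n) :
  free [seq c i | i <- enum 'I_n] -> (forall i, c i = \sum_j alpha i j *: a j) ->
  alpha \in unitmx.
Proof.
move=> c_free hca; rewrite -row_free_unit -kermx_eq0; apply: contraT.
case/rowV0Pn=> v; rewrite sub_kermx => /eqP v_alpha.
suff -> : v = 0 by rewrite eqxx.
have comb0 : \sum_i v 0 i *: c i = 0.
  under eq_bigr do rewrite hca scaler_sumr.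
  rewrite exchange_big big1 //= => j _; under eq_bigr do rewrite scalerA.
  rewrite -scaler_suml; have := congr1 (fun M : 'rV[k]_n => M 0 j) v_alpha.
  by rewrite !mxE => ->; rewrite scale0r.
apply/rowP => i; rewrite mxE -(coords_sum c_free (v 0) i) comb0.
exact: lin0 (coords_lin c i).
Qed.

Section Hopf.
Variables (k : fieldType) (K : algType k) (Delta : K -> seq (K * K)) (eps : K -> k)
  (S : K -> K).
Hypothesis hopfK : hopf_algebra Delta eps S.

Let Delta_linear : tensor_linear Delta.
Proof. by case: hopfK. Qed.
Let Delta_mul x y :
  tensor_eq (Delta (x * y)) [seq (p.1 * q.1, p.2 * q.2) | p <- Delta x, q <- Delta y].
Proof. by case: hopfK => _ []. Qed.
Let Delta_one : tensor_eq (Delta 1) [:: (1, 1)].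
Proof. by case: hopfK => _ [_ []]. Qed.
Let Delta_coassoc x :
  tensor3_eq [seq (q.1, q.2, p.2) | p <- Delta x, q <- Delta p.1]
             [seq (p.1, q.1, q.2) | p <- Delta x, q <- Delta p.2].
Proof. by case: hopfK => _ [_ [_ []]]. Qed.
Let eps_linear : lin (eps : K -> k^o).
Proof. by case: hopfK => _ [_ [_ [_ []]]]. Qed.
Let eps_mul x y : eps (x * y) = eps x * eps y.
Proof. by case: hopfK => _ [_ [_ [_ [_ []]]]]. Qed.
Let eps_one : eps 1 = 1.
Proof. by case: hopfK => _ [_ [_ [_ [_ [_ []]]]]]. Qed.
Let counit_l x : \sum_(p <- Delta x) eps p.1 *: p.2 = x.
Proof. by case: hopfK => _ [_ [_ [_ [_ [_ [_ []]]]]]]. Qed.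
Let counit_r x : \sum_(p <- Delta x) eps p.2 *: p.1 = x.
Proof. by case: hopfK => _ [_ [_ [_ [_ [_ [_ [_ []]]]]]]]. Qed.
Let S_linear : lin S.
Proof. by case: hopfK => _ [_ [_ [_ [_ [_ [_ [_ [_ []]]]]]]]]. Qed.
Let antipode_l x : \sum_(p <- Delta x) S p.1 * p.2 = (eps x)%:A.
Proof. by case: hopfK => _ [_ [_ [_ [_ [_ [_ [_ [_ [_ []]]]]]]]]]. Qed.
Let antipode_r x : \sum_(p <- Delta x) p.1 * S p.2 = (eps x)%:A.
Proof. by case: hopfK => _ [_ [_ [_ [_ [_ [_ [_ [_ [_ []]]]]]]]]]. Qed.

Let bilinear_Sl : bilinear_map (fun u v : K => S u * v).
Proof. by apply: bilinear_comp (bilinear_mul K) S_linear _. Qed.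
Let bilinear_Sr : bilinear_map (fun u v : K => u * S v).
Proof. by apply: bilinear_comp (bilinear_mul K) _ S_linear. Qed.

Definition grouplike (z : K) : Prop := tensor_eq (Delta z) [:: (z, z)] /\ eps z = 1.

Definition comatrix n (M : 'M[K]_n) : Prop :=
  (forall i j, tensor_eq (Delta (M i j)) [seq (M i s, M s j) | s <- enum 'I_n]) /\
  (forall i j, eps (M i j) = (i == j)%:R).

(* The antipode axioms say exactly that S(M) is a two-sided inverse of M. *)
Lemma comatrix_antipode n (M : 'M[K]_n) :
  comatrix M -> map_mx S M *m M = 1%:M /\ M *m map_mx S M = 1%:M.
Proof.
case=> hD he; split; apply/matrixP => i j; rewrite !mxE -scaler_nat.
- have := antipode_l (M i j); rewrite (hD i j _ _ bilinear_Sl) big_map big_enum he => <-.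
  by apply: eq_bigr => s _; rewrite !mxE.
- have := antipode_r (M i j); rewrite (hD i j _ _ bilinear_Sr) big_map big_enum he => <-.
  by apply: eq_bigr => s _; rewrite !mxE.
Qed.

Lemma grouplike_antipode z : grouplike z -> [/\ S z * z = 1, z * S z = 1 & grouplike (S z)].
Proof.
case=> hDz hez.
have Sz_z : S z * z = 1.
  by have := antipode_l z; rewrite (hDz _ _ bilinear_Sl) big_seq1 hez scale1r.
have z_Sz : z * S z = 1.
  by have := antipode_r z; rewrite (hDz _ _ bilinear_Sr) big_seq1 hez scale1r.
split => //; split; last by have := eps_mul z (S z); rewrite z_Sz eps_one hez mul1r.
move=> V phi hp; set w := S z.
have hb : bilinear_map (fun u v => phi (w * u) (w * v)).
  by apply: bilinear_comp => //; apply: lin_mull.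
have := tensor_eq_mul (y := w) Delta_mul hDz (tensor_eq_refl _) hb.
rewrite z_Sz (Delta_one hb) big_allpairs_dep !big_seq1 /= !mulr1 => ->.
by apply: eq_bigr => q _; rewrite !mulrA Sz_z !mul1r.
Qed.

Lemma antipode_antipode_grouplike z : grouplike z -> S (S z) = z.
Proof.
case/grouplike_antipode=> Sz_z _ /grouplike_antipode [SSz_Sz _ _].
by rewrite -[S (S z)]mulr1 -Sz_z mulrA SSz_Sz mul1r.
Qed.

Lemma antipode_mul_grouplike z x : grouplike z -> S (x * z) = S z * S x.
Proof.
move=> gz; have [_ z_Sz _] := grouplike_antipode gz; case: gz => hDz hez.
set T := fun u => S (u * z).
have T_linear : lin T by move=> c u v; rewrite /T mulrDl -scalerAl S_linear.
have T_conv a : \sum_(p <- Delta a) T p.1 * p.2 = eps a *: S z.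
  have := antipode_l (a * z).
  rewrite (tensor_eq_mul (x := a) Delta_mul (tensor_eq_refl _) hDz bilinear_Sl).
  rewrite big_allpairs_dep /= eps_mul hez mulr1 => h.
  rewrite -mulr_algl -h mulr_suml; apply: eq_bigr => p _.
  by rewrite big_seq1 /= -!mulrA z_Sz mulr1.
have ht : trilinear_map (fun u v r : K => T u * v * S r).
  split; [|split] => c u v a b.
  - by rewrite T_linear !mulrDl -!scalerAl.
  - by rewrite mulrDr mulrDl -scalerAr -scalerAl.
  - by rewrite S_linear mulrDr -scalerAr.
have := Delta_coassoc x ht; rewrite !big_allpairs_dep /=.
have -> : \sum_(p <- Delta x) \sum_(q <- Delta p.1) T q.1 * q.2 * S p.2 = S z * S x.
  rewrite -[in RHS](counit_l x) (lin_sum _ _ S_linear) mulr_sumr; apply: eq_bigr => p _.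
  by rewrite -mulr_suml T_conv (linZ _ _ S_linear) -scalerAl scalerAr.
move=> ->; rewrite -/(T x) -{1}(counit_r x) (lin_sum _ _ T_linear).
apply: eq_bigr => p _; under eq_bigr do rewrite -mulrA.
by rewrite -mulr_sumr antipode_r mulr_algr (linZ _ _ T_linear).
Qed.

Section Comodule.
Variables (E : falgType k) (rho : E -> seq (K * E)).
Hypothesis comodE : comodule_algebra Delta eps rho.

Let rho_linear : tensor_linear rho.
Proof. by case: comodE. Qed.
Let rho_coassoc x :
  tensor3_eq [seq (q.1, q.2, p.2) | p <- rho x, q <- Delta p.1]
             [seq (p.1, q.1, q.2) | p <- rho x, q <- rho p.2].
Proof. by case: comodE => _ []. Qed.
Let rho_counit x : \sum_(p <- rho x) eps p.1 *: p.2 = x.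
Proof. by case: comodE => _ [_ []]. Qed.
Let rho_mul x y :
  tensor_eq (rho (x * y)) [seq (p.1 * q.1, p.2 * q.2) | p <- rho x, q <- rho y].
Proof. by case: comodE => _ [_ [_ []]]. Qed.

(* The matrix of the coaction on a free family X is a comatrix: this is
   coassociativity and counitality of rho read off in the coordinates of X. *)
Lemma coaction_comatrix n (X : 'I_n -> E) (M : 'M[K]_n) :
  free [seq X i | i <- enum 'I_n] ->
  (forall i, tensor_eq (rho (X i)) [seq (M i s, X s) | s <- enum 'I_n]) ->
  comatrix M.
Proof.
move=> X_free hX; split=> [i j V psi hpsi | i j].
- have ht := trilinear_weight (coords_lin X j) hpsi.
  have := rho_coassoc (X i) ht; rewrite !big_allpairs_dep /=.
  rewrite (tensor_eq_nestl Delta_linear ht (hX i)) (tensor_eq_nestr rho_linear ht (hX i)).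
  rewrite 3!big_map !big_enum /=; under eq_bigr do rewrite -scaler_sumr.
  rewrite sum_coords_basis // => ->; rewrite big_map big_enum; apply: eq_bigr => s _.
  have hb := bilinear_weight (coords_lin X j) (bilinear_linr (M i s) hpsi).
  by rewrite (hX s _ _ hb) big_map big_enum sum_coords_basis.
- have hb := bilinear_weight (coords_lin X j) eps_linear.
  have := congr1 (coords X j) (rho_counit (X i)).
  rewrite coords_basis // (lin_sum _ _ (coords_lin X j)) => <-.
  have := hX i _ _ hb; rewrite big_map big_enum sum_coords_basis // => <-.
  by apply: eq_bigr => p _; rewrite (linZ _ _ (coords_lin X j)); exact: mulrC.
Qed.

(* The coefficient of the coaction on a nonzero vector spanning a
   subcomodule is grouplike (the case n = 1 of coaction_comatrix). *)
Lemma coaction_grouplike (e : E) (D : K) :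
  free [:: e] -> tensor_eq (rho e) [:: (D, e)] -> grouplike D.
Proof.
have enum1 : enum 'I_1 = [:: ord0] by rewrite enum_ordSl enum_ord0.
move=> e_free hD; have [] := @coaction_comatrix 1 (fun=> e) (const_mx D).
- by rewrite enum1.
- by move=> i; rewrite enum1 /= mxE.
by move=> hDD heD; split; [have := hDD ord0 ord0 | have := heD ord0 ord0];
  rewrite ?enum1 /= !mxE.
Qed.

(* Multiplicativity of rho: if P_i Q_j = delta_ij e with rho e = D (x) e, the
   coaction matrices of P and Q satisfy M_P M_Q^T = D I. *)
Lemma coaction_pairing (e : E) (D : K) n (P Q : 'I_n -> E) (MP MQ : 'M[K]_n) :
  free [:: e] -> (forall i j, P i * Q j = (i == j)%:R *: e) ->
  tensor_eq (rho e) [:: (D, e)] ->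
  (forall i, tensor_eq (rho (P i)) [seq (MP i s, P s) | s <- enum 'I_n]) ->
  (forall i, tensor_eq (rho (Q i)) [seq (MQ i s, Q s) | s <- enum 'I_n]) ->
  MP *m MQ^T = D%:M.
Proof.
move=> e_free hPQ hD hP hQ; apply/matrixP => i j; rewrite !mxE.
pose fe : E -> k^o := coord [tuple e] 0.
have fe_lin : lin fe by move=> c x y; rewrite /fe linearP.
have fe_e : fe e = 1 by rewrite /fe (coord_free 0 0 e_free).
have fe_scale (x : k) : fe (x *: e) = x by rewrite (linZ _ _ fe_lin) fe_e; exact: mulr1.
have hb := bilinear_weight fe_lin (@lin_id _ K).
have := tensor_eq_mul rho_mul (hP i) (hQ j) hb.
rewrite hPQ (tensor_eq_scale _ rho_linear hD hb) !big_allpairs_dep /= big_seq1 /=.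
rewrite fe_e scale1r -scaler_nat => ->; rewrite big_map big_enum; apply: eq_bigr => s _.
rewrite big_map big_enum /=; under eq_bigr do rewrite hPQ fe_scale.
by under eq_bigr do rewrite eq_sym; rewrite sum_kronecker mxE.
Qed.

Lemma coaction_intertwines n (a c : 'I_n -> E) (alpha : 'M[k]_n) (Y G : 'M[K]_n) :
  free [seq a i | i <- enum 'I_n] -> (forall i, c i = \sum_j alpha i j *: a j) ->
  (forall i, tensor_eq (rho (a i)) [seq (Y i s, a s) | s <- enum 'I_n]) ->
  (forall i, tensor_eq (rho (c i)) [seq (G i s, c s) | s <- enum 'I_n]) ->
  G *m map_mx (fun x : k => x%:A) alpha = map_mx (fun x : k => x%:A) alpha *m Y.
Proof.
move=> a_free hca hY hG; apply/matrixP => i t; rewrite !mxE.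
have hb := bilinear_weight (coords_lin a t) (@lin_id _ K).
pose ev x := \sum_(p <- rho x) coords a t p.2 *: p.1.
have ev_lin : lin ev := tensor_linear_eval rho_linear hb.
have ev_c : ev (c i) = \sum_s alpha s t *: G i s.
  rewrite /ev (hG i _ _ hb) big_map big_enum; apply: eq_bigr => s _.
  by rewrite /= hca coords_sum.
have ev_a j : ev (a j) = Y j t.
  by rewrite /ev (hY j _ _ hb) big_map big_enum sum_coords_basis.
transitivity (ev (c i)).
  by rewrite ev_c; apply: eq_bigr => s _; rewrite mxE mulr_algr.
rewrite hca (lin_sum _ _ ev_lin); apply: eq_bigr => j _.
by rewrite (linZ _ _ ev_lin) ev_a mxE mulr_algl.
Qed.

Lemma coaction_change_of_basis n (a c : 'I_n -> E) (alpha : 'M[k]_n) (Y G : 'M[K]_n) :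
  free [seq a i | i <- enum 'I_n] -> free [seq c i | i <- enum 'I_n] ->
  (forall i, c i = \sum_j alpha i j *: a j) ->
  (forall i, tensor_eq (rho (a i)) [seq (Y i s, a s) | s <- enum 'I_n]) ->
  (forall i, tensor_eq (rho (c i)) [seq (G i s, c s) | s <- enum 'I_n]) ->
  G = map_mx (fun x : k => x%:A) alpha *m Y *m map_mx (fun x : k => x%:A) (invmx alpha).
Proof.
move=> a_free c_free hca hY hG.
have alpha_unit := combination_unitmx c_free hca.
rewrite -(coaction_intertwines a_free hca hY hG) -mulmxA -(map_mxM (in_alg K)).
by rewrite mulmxV // map_mx1 mulmx1.
Qed.

End Comodule.

End Hopf.

Section AntipodeMatrices.
Variables (R : pzRingType) (S : R -> R) (n : nat) (Y F G : 'M[R]_n) (D Dinv : R).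

Lemma mulmx_scalar_entry m (A : 'M[R]_(m, n)) d i j : (A *m d%:M) i j = A i j * d.
Proof.
rewrite mxE (bigD1 j) //= mxE eqxx mulr1n big1 ?addr0 // => s sj.
by rewrite mxE (negbTE sj) mulr0n mulr0.
Qed.

(* Right multiplication by a scalar matrix commutes with transposition,
   although R need not be commutative. *)
Lemma trmx_mul_scalar (A : 'M[R]_n) d : (A *m d%:M)^T = A^T *m d%:M.
Proof. by apply/matrixP => i j; rewrite [LHS]mxE !mulmx_scalar_entry mxE. Qed.

Hypotheses (SY_Y : map_mx S Y *m Y = 1%:M) (SF_F : map_mx S F *m F = 1%:M)
  (SG_G : map_mx S G *m G = 1%:M) (D_Dinv : D * Dinv = 1).
Hypotheses (Y_F : Y *m F^T = D%:M) (F_G : F *m G^T = D%:M).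

Lemma antipode_pairing_relations :
  [/\ map_mx S Y = F^T *m Dinv%:M, map_mx S F *m map_mx S Y^T = Dinv%:M,
      map_mx S G *m map_mx S F^T = Dinv%:M & map_mx S F^T *m D%:M = G].
Proof.
have FT : F^T = map_mx S Y *m D%:M by rewrite -Y_F mulmxA SY_Y mul1mx.
have GT : G^T = map_mx S F *m D%:M by rewrite -F_G mulmxA SF_F mul1mx.
have cancel_D (A : 'M[R]_n) : A *m D%:M *m Dinv%:M = A.
  by rewrite -mulmxA -scalar_mxM D_Dinv mulmx1.
have SY : map_mx S Y = F^T *m Dinv%:M by rewrite FT cancel_D.
have SFD : map_mx S F^T *m D%:M = G.
  by rewrite -map_trmx -trmx_mul_scalar -GT trmxK.
have SFT : map_mx S F^T = G *m Dinv%:M by rewrite -SFD cancel_D.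
split => //.
- by rewrite -map_trmx SY trmx_mul_scalar trmxK mulmxA SF_F mul1mx.
- by rewrite SFT mulmxA SG_G mul1mx.
Qed.

Lemma antipode_square :
  (forall x, S (x * Dinv) = D * S x) ->
  map_mx S Y = F^T *m Dinv%:M -> map_mx S F^T *m D%:M = G ->
  map_mx (fun x => S (S x)) Y = D%:M *m G *m Dinv%:M.
Proof.
move=> S_mulDinv SY SFD; apply/matrixP => i j; rewrite mxE.
have := congr1 (fun M : 'M[R]_n => M i j) SY; rewrite /= mxE mulmx_scalar_entry mxE => ->.
rewrite S_mulDinv -SFD mulmx_scalar_entry mul_scalar_mx mxE mulmx_scalar_entry !mxE.
by rewrite -!mulrA D_Dinv mulr1.
Qed.

End AntipodeMatrices.

Unset Implicit Arguments.

Theorem lemma3p1 (k : fieldType) (K : algType k)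
  (Delta : K -> seq (K * K)) (eps : K -> k) (S : K -> K)
  (E : falgType k) (Egr : nat -> {vspace E}) (l n : nat)
  (e : E) (a b c : 'I_n -> E) (alpha : 'M[k]_n)
  (rho : E -> seq (K * E)) (Y F G : 'M[K]_n) (D : K) :
  hopf_algebra Delta eps S ->
  connected_graded Egr ->
  graded_frobenius Egr ->
  top_degree Egr l ->
  basis_of (Egr l) [:: e] ->
  basis_of (Egr 1%N) [seq a i | i <- enum 'I_n] ->
  basis_of (Egr l.-1) [seq b i | i <- enum 'I_n] ->
  (forall i j, a i * b j = (i == j)%:R *: e) ->
  basis_of (Egr 1%N) [seq c i | i <- enum 'I_n] ->
  (forall i j, b i * c j = (i == j)%:R *: e) ->
  (forall i, c i = \sum_j alpha i j *: a j) ->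
  comodule_algebra Delta eps rho ->
  grading_preserving Egr rho ->
  (forall i, tensor_eq (rho (a i)) [seq (Y i s, a s) | s <- enum 'I_n]) ->
  (forall i, tensor_eq (rho (b i)) [seq (F i s, b s) | s <- enum 'I_n]) ->
  (forall i, tensor_eq (rho (c i)) [seq (G i s, c s) | s <- enum 'I_n]) ->
  tensor_eq (rho e) [:: (D, e)] ->
  exists Dinv : K, D * Dinv = 1 /\ Dinv * D = 1 /\
    (* (a) *) (Y *m map_mx S Y = 1%:M /\ map_mx S Y *m Y = 1%:M) /\
    (* (b) *) (G *m map_mx S G = 1%:M /\ map_mx S G *m G = 1%:M) /\
    (* (c) *) (Y *m F^T = D%:M /\ map_mx S Y = F^T *m Dinv%:M) /\
    (* (d) *) map_mx S F *m map_mx S Y^T = Dinv%:M /\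
    (* (e) *) (map_mx S G *m map_mx S F^T = Dinv%:M /\
               map_mx S F^T *m D%:M = G) /\
    (* (f) *) map_mx (fun x => S (S x)) Y = D%:M *m G *m Dinv%:M /\
    (* (g) *) G = map_mx (fun x : k => x%:A) alpha *m Y
                    *m map_mx (fun x : k => x%:A) (invmx alpha).
Proof.
move=> hopfK _ _ _ e_basis a_basis b_basis ab c_basis bc ca comodE _ hY hF hG he.
have e_free := basis_free e_basis.
have a_free := basis_free a_basis.
have c_free := basis_free c_basis.
have gD := coaction_grouplike hopfK comodE e_free he.
have [SD_D D_SD gSD] := grouplike_antipode hopfK gD.
have [SY_Y Y_SY] := comatrix_antipode hopfK (coaction_comatrix hopfK comodE a_free hY).
have [SF_F _] :=
  comatrix_antipode hopfK (coaction_comatrix hopfK comodE (basis_free b_basis) hF).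
have [SG_G G_SG] := comatrix_antipode hopfK (coaction_comatrix hopfK comodE c_free hG).
have Y_F := coaction_pairing comodE e_free ab he hY hF.
have F_G := coaction_pairing comodE e_free bc he hF hG.
have [SY SF_SY SG_SF SF_D] := antipode_pairing_relations SY_Y SF_F SG_G D_SD Y_F F_G.
have S_mulSD x : S (x * S D) = D * S x.
  by rewrite (antipode_mul_grouplike hopfK _ gSD) (antipode_antipode_grouplike hopfK gD).
have S2Y := antipode_square D_SD S_mulSD SY SF_D.
have G_conj := coaction_change_of_basis comodE a_free c_free ca hY hG.
exists (S D).
by do ![assumption | split].
Qed.
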